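(* Let $S\subset\mathbb R^2$ be a finite set of $n>4$ points, none of which lies at the center $O$ of SED$(S)$. If $S$ is Pre-regular, then the cyclic order of the points of $S$ around $O$ coincides with the cyclic order of the points of $S$ around the center of the supporting polygon of $S$.
   Context: SED$(S)$ is the smallest closed disk containing $S$, SEC$(S)$ its boundary circle, and $O$ its center. $S$ is \emph{Pre-regular} if there is a regular $n$-gon $P$ (the supporting polygon) such that for every pair of adjacent edges of $P$, one of the two edges contains exactly two points of $S$ (possibly at its endpoints) and the relative interior of the other edge contains no point of $S$. *)

From Stdlib Require Import Reals List.
Import ListNotations.
Open Scope R_scope.

Definition point : Type := (R * R)%type.

Definition dist2 (p q : point) : R :=
  (fst p - fst q) ^ 2 + (snd p - snd q) ^ 2.

Definition is_SED_center (S : list point) (O : point) : Prop :=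
  exists r : R, 0 <= r /\
    (forall p, In p S -> dist2 O p <= r * r) /\
    (forall (c : point) (r' : R), 0 <= r' ->
        (forall p, In p S -> dist2 c p <= r' * r') -> r <= r').

(* k-th vertex of the regular n-gon with center C, circumradius Rad, phase phi. *)
Definition vtx (C : point) (Rad phi : R) (n k : nat) : point :=
  (fst C + Rad * cos (phi + 2 * PI * INR k / INR n),
   snd C + Rad * sin (phi + 2 * PI * INR k / INR n)).

Definition on_segment (u v p : point) : Prop :=
  exists t : R, 0 <= t <= 1 /\
    p = (fst u + t * (fst v - fst u), snd u + t * (snd v - snd u)).

Definition on_open_segment (u v p : point) : Prop :=
  exists t : R, 0 < t < 1 /\
    p = (fst u + t * (fst v - fst u), snd u + t * (snd v - snd u)).

(* edge k of the polygon is [vtx k, vtx (k+1)] (indices mod n, by periodicity) *)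
Definition edge_has_exactly_two (S : list point) (C : point) (Rad phi : R)
    (n k : nat) : Prop :=
  exists p q, In p S /\ In q S /\ p <> q /\
    on_segment (vtx C Rad phi n k) (vtx C Rad phi n (Datatypes.S k)) p /\
    on_segment (vtx C Rad phi n k) (vtx C Rad phi n (Datatypes.S k)) q /\
    (forall x, In x S ->
       on_segment (vtx C Rad phi n k) (vtx C Rad phi n (Datatypes.S k)) x ->
       x = p \/ x = q).

Definition edge_relint_empty (S : list point) (C : point) (Rad phi : R)
    (n k : nat) : Prop :=
  forall x, In x S ->
    ~ on_open_segment (vtx C Rad phi n k) (vtx C Rad phi n (Datatypes.S k)) x.

Definition supporting_polygon (S : list point) (C : point) (Rad phi : R) : Prop :=
  0 < Rad /\
  forall k : nat, (k < length S)%nat ->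
    (edge_has_exactly_two S C Rad phi (length S) k /\
     edge_relint_empty S C Rad phi (length S) (Datatypes.S k)) \/
    (edge_has_exactly_two S C Rad phi (length S) (Datatypes.S k) /\
     edge_relint_empty S C Rad phi (length S) k).

Definition pre_regular (S : list point) : Prop :=
  exists C Rad phi, supporting_polygon S C Rad phi.

(* Strict counterclockwise cyclic order around X: sweeping counterclockwise
   around X starting from the direction of a, one meets the direction of b
   strictly before the direction of c (and strictly after a). *)
Definition ccw_between (X a b c : point) : Prop :=
  exists ta tb tc ra rb rc : R,
    0 < ra /\ 0 < rb /\ 0 < rc /\
    a = (fst X + ra * cos ta, snd X + ra * sin ta) /\
    b = (fst X + rb * cos tb, snd X + rb * sin tb) /\
    c = (fst X + rc * cos tc, snd X + rc * sin tc) /\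
    ta < tb /\ tb < tc /\ tc < ta + 2 * PI.

(* Let P be the supporting polygon, with center C.  First, every point of S
   lies on the boundary of P: the n half-open edges are disjoint, and the
   condition on adjacent edges puts at least one point of S on every half-open
   edge, except that an empty one is preceded by a half-open edge with two
   points; so the boundary already carries all n points.

   Second, the center O of the smallest enclosing disk lies in the interior of
   P.  If O were outside an edge line, or on it with no point of S at one of the
   two ends of the diameter along that line, O could be moved so that every
   point of S gets strictly closer, contradicting minimality.  Otherwise the
   diameter along the edge line lies inside that edge, and since n >= 5, a point
   of S on the edge two or three steps further lies outside the disk.

   Finally, for three points on the boundary of a convex polygon, the cyclic
   order seen from an interior point is determined by the orientation of the
   triangle they span, or, when they are collinear on one edge line, by their
   order along that line; it is therefore the same from O and from C. *)

From Stdlib Require Import Reals List Lra Lia ZArith Classical ClassicalEpsilon.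

Open Scope nat_scope.

(** * Sums of natural numbers *)

Fixpoint nat_sum (f : nat -> nat) (n : nat) : nat :=
  match n with 0 => 0 | S m => nat_sum f m + f m end.

Lemma nat_sum_le f g n : (forall j, j < n -> f j <= g j) -> nat_sum f n <= nat_sum g n.
Proof.
  induction n as [|n IH]; simpl; intros H; [lia|].
  pose proof (H n (Nat.lt_succ_diag_r n)).
  assert (nat_sum f n <= nat_sum g n) by (apply IH; intros j Hj; apply H; lia).
  lia.
Qed.

Lemma nat_sum_ext f g n : (forall j, j < n -> f j = g j) -> nat_sum f n = nat_sum g n.
Proof. intros H; apply Nat.le_antisymm; apply nat_sum_le; intros j Hj; rewrite H; auto. Qed.

Lemma nat_sum_add f g n : nat_sum (fun j => f j + g j) n = nat_sum f n + nat_sum g n.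
Proof. induction n; simpl; lia. Qed.

Lemma nat_sum_shift f n : nat_sum (fun j => f (S j)) n + f 0 = nat_sum f n + f n.
Proof. induction n; simpl; lia. Qed.

Lemma nat_sum_const0 n : nat_sum (fun _ => 0) n = 0.
Proof. induction n; simpl; lia. Qed.

Lemma nat_sum_const1 n : nat_sum (fun _ => 1) n = n.
Proof. induction n; simpl; lia. Qed.

(* Charge each zero entry to its predecessor, which is at least 2. *)
Lemma cyclic_nat_sum_ge (c : nat -> nat) n : 1 <= n -> c n = c 0 ->
  (forall j, 1 <= j <= n -> 1 <= c j \/ (c j = 0 /\ 2 <= c (j - 1))) ->
  n <= nat_sum c n.
Proof.
  intros Hn Hper Hloc.
  set (z := fun j => if Nat.eqb (c j) 0 then 1 else 0).
  set (w := fun j => if Nat.leb 2 (c j) then 1 else 0).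
  assert (H1 : nat_sum (fun j => 1 + w j) n <= nat_sum (fun j => c j + z j) n).
  { apply nat_sum_le; intros j _; unfold z, w; destruct (c j) as [|[|k]]; simpl; lia. }
  rewrite !nat_sum_add, nat_sum_const1 in H1.
  assert (H2 : nat_sum (fun j => z (S j)) n <= nat_sum w n).
  { apply nat_sum_le; intros j Hj; unfold z, w.
    destruct (Hloc (S j)) as [A|[A B]]; [lia| |].
    - destruct (Nat.eqb_spec (c (S j)) 0); [lia|]; destruct (Nat.leb 2 (c j)); lia.
    - rewrite A; replace (S j - 1) with j in B by lia.
      destruct (Nat.leb_spec 2 (c j)); simpl; lia. }
  pose proof (nat_sum_shift z n).
  assert (z n = z 0) by (unfold z; rewrite Hper; auto).
  lia.
Qed.

Lemma nat_sum_indicator_le1 {A} (b : nat -> A -> bool) (x : A) n :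
  (forall j1 j2, j1 < n -> j2 < n -> b j1 x = true -> b j2 x = true -> j1 = j2) ->
  nat_sum (fun j => if b j x then 1 else 0) n <= 1.
Proof.
  induction n as [|m IH]; simpl; intros H; [lia|].
  destruct (b m x) eqn:E.
  - assert (nat_sum (fun j => if b j x then 1 else 0) m = 0); [|lia].
    rewrite (nat_sum_ext _ (fun _ => 0)); [apply nat_sum_const0|].
    intros j Hj; destruct (b j x) eqn:E2; auto.
    specialize (H j m ltac:(lia) ltac:(lia) E2 E); lia.
  - rewrite Nat.add_0_r; apply IH; intros; apply H; auto; lia.
Qed.

Lemma filter_length_cons {A} (f : A -> bool) x L :
  length (filter f (x :: L)) = (if f x then 1 else 0) + length (filter f L).
Proof. simpl; destruct (f x); reflexivity. Qed.

Section DisjointFilters.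

Context {A : Type} (b : nat -> A -> bool) (n : nat).

Definition filters_disjoint_on (L : list A) : Prop :=
  forall x, In x L -> forall j1 j2, j1 < n -> j2 < n -> b j1 x = true -> b j2 x = true -> j1 = j2.

Lemma nat_sum_filter_length_le L : filters_disjoint_on L ->
  nat_sum (fun j => length (filter (b j) L)) n <= length L.
Proof.
  induction L as [|x L IH]; intros H.
  - rewrite (nat_sum_ext _ (fun _ => 0)) by auto; rewrite nat_sum_const0; simpl; lia.
  - rewrite (nat_sum_ext _ (fun j => (if b j x then 1 else 0) + length (filter (b j) L)))
      by (intros; apply filter_length_cons).
    rewrite nat_sum_add; simpl.
    pose proof (nat_sum_indicator_le1 b x n (H x (or_introl eq_refl))).
    assert (nat_sum (fun j => length (filter (b j) L)) n <= length L)
      by (apply IH; intros y Hy; apply H; right; exact Hy).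
    lia.
Qed.

Lemma nat_sum_filter_length_lt L x : filters_disjoint_on L -> In x L ->
  (forall j, j < n -> b j x = false) ->
  nat_sum (fun j => length (filter (b j) L)) n < length L.
Proof.
  intros H Hx Hnone; destruct (in_split x L Hx) as (L1 & L2 & ->).
  rewrite (nat_sum_ext _ (fun j => length (filter (b j) L1) + length (filter (b j) L2))).
  2: { intros j Hj; rewrite filter_app, length_app, filter_length_cons, Hnone by auto; lia. }
  rewrite nat_sum_add, length_app; simpl.
  assert (nat_sum (fun j => length (filter (b j) L1)) n <= length L1)
    by (apply nat_sum_filter_length_le; intros y Hy; apply H, in_or_app; left; exact Hy).
  assert (nat_sum (fun j => length (filter (b j) L2)) n <= length L2)
    by (apply nat_sum_filter_length_le; intros y Hy; apply H, in_or_app; right; right; exact Hy).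
  lia.
Qed.

End DisjointFilters.

Lemma filter_length_ge1 {A} (f : A -> bool) L p : In p L -> f p = true ->
  1 <= length (filter f L).
Proof.
  intros Hp Hf; assert (H : In p (filter f L)) by (apply filter_In; auto).
  destruct (filter f L); simpl in *; [contradiction | lia].
Qed.

Lemma filter_length_ge2 {A} (f : A -> bool) L p q : In p L -> In q L -> p <> q ->
  f p = true -> f q = true -> 2 <= length (filter f L).
Proof.
  intros Hp Hq Hpq Hfp Hfq.
  assert (Hp' : In p (filter f L)) by (apply filter_In; auto).
  assert (Hq' : In q (filter f L)) by (apply filter_In; auto).
  destruct (filter f L) as [|x [|y l]]; simpl in *; try lia; try tauto.
  destruct Hp' as [<-|[]], Hq' as [<-|[]]; tauto.
Qed.

Open Scope R_scope.

(** * Polar coordinates and cyclic order *)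

Lemma sin_add_2PI t : sin (t + 2 * PI) = sin t.
Proof. rewrite sin_plus, sin_2PI, cos_2PI. ring. Qed.

Lemma cos_add_2PI t : cos (t + 2 * PI) = cos t.
Proof. rewrite cos_plus, sin_2PI, cos_2PI. ring. Qed.

Lemma trig_period_Z (x : R) (k : Z) :
  cos (x + 2 * PI * IZR k) = cos x /\ sin (x + 2 * PI * IZR k) = sin x.
Proof.
  destruct (Z_le_gt_dec 0 k) as [Hk|Hk].
  - replace (x + 2 * PI * IZR k) with (x + 2 * INR (Z.to_nat k) * PI)
      by (rewrite INR_IZR_INZ, Z2Nat.id by exact Hk; ring).
    split; [apply cos_period | apply sin_period].
  - pose proof (cos_period (x + 2 * PI * IZR k) (Z.to_nat (- k))) as Hc.
    pose proof (sin_period (x + 2 * PI * IZR k) (Z.to_nat (- k))) as Hs.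
    replace (x + 2 * PI * IZR k + 2 * INR (Z.to_nat (- k)) * PI) with x in Hc, Hs
      by (rewrite INR_IZR_INZ, Z2Nat.id, opp_IZR by lia; ring).
    split; symmetry; assumption.
Qed.

Lemma cos_antitone x y : 0 <= x -> x <= y -> y <= PI -> cos y <= cos x.
Proof.
  intros Hx Hxy Hy; destruct (Req_dec x y) as [->|Hne]; [lra|].
  left; apply cos_decreasing_1; lra.
Qed.

Lemma cos_triple x : cos (3 * x) = 4 * cos x ^ 3 - 3 * cos x.
Proof.
  replace (3 * x) with (2 * x + x) by ring.
  rewrite cos_plus, cos_2a, sin_2a.
  pose proof (sin2_cos2 x) as H; unfold Rsqr in H.
  transitivity (cos x * (cos x * cos x) - 3 * cos x * (sin x * sin x)); [ring|].
  replace (sin x * sin x) with (1 - cos x * cos x) by lra; ring.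
Qed.

(* As [cos (3 PI / 5) = - cos (2 PI / 5)], [cos (PI / 5)] is the positive root
   of [4 c^2 - 2 c - 1], i.e. [(1 + sqrt 5) / 4]. *)
Lemma cos_PI5_ge : 0.8 <= cos (PI / 5).
Proof.
  set (c := cos (PI / 5)).
  assert (Hc0 : 0 <= c) by (apply cos_ge_0; pose proof PI_RGT_0; lra).
  assert (E : cos (3 * (PI / 5)) = - cos (2 * (PI / 5))).
  { replace (3 * (PI / 5)) with (PI - 2 * (PI / 5)) by field. apply Rtrigo_facts.cos_pi_minus. }
  rewrite cos_triple, cos_2a_cos in E; fold c in E.
  assert (Q : (c + 1) * (4 * c * c - 2 * c - 1) = 0) by nra.
  apply Rmult_integral in Q; destruct Q; nra.
Qed.

Definition polar_pt (X : point) (r t : R) : point :=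
  (fst X + r * cos t, snd X + r * sin t).

Lemma polar_coords (X p : point) : p <> X ->
  exists r t, 0 < r /\ p = polar_pt X r t.
Proof.
  intros Hp.
  set (x := fst p - fst X); set (y := snd p - snd X).
  assert (Hxy : 0 < x * x + y * y).
  { destruct (Req_dec x 0), (Req_dec y 0).
    - exfalso; apply Hp; destruct p, X; unfold x, y in *; simpl in *; f_equal; lra.
    - assert (0 < y * y) by (apply Rsqr_pos_lt; auto); nra.
    - assert (0 < x * x) by (apply Rsqr_pos_lt; auto); nra.
    - assert (0 < x * x) by (apply Rsqr_pos_lt; auto); nra. }
  set (r := sqrt (x * x + y * y)).
  assert (Hr : 0 < r) by (apply sqrt_lt_R0; auto).
  assert (Hrr : r * r = x * x + y * y) by (apply sqrt_sqrt; lra).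
  assert (Hc : -1 <= x / r <= 1).
  { split; apply (Rmult_le_reg_r r); auto;
      unfold Rdiv; rewrite Rmult_assoc, Rinv_l by lra; nra. }
  assert (Hs : sqrt (1 - (x / r)²) = Rabs y / r).
  { replace (1 - (x / r)²) with (Rsqr (y / r)).
    - rewrite sqrt_Rsqr_abs; unfold Rdiv; rewrite Rabs_mult, (Rabs_pos_eq (/ r)); auto.
      left; apply Rinv_0_lt_compat; auto.
    - unfold Rsqr; field_simplify_eq; lra. }
  exists r.
  destruct (Rle_dec 0 y) as [Hy|Hy].
  - exists (acos (x / r)); split; auto.
    unfold polar_pt; rewrite cos_acos, sin_acos, Hs, Rabs_pos_eq by auto.
    destruct p, X; unfold x, y in *; simpl in *; f_equal; field; lra.
  - exists (- acos (x / r)); split; auto.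
    unfold polar_pt; rewrite <- cos_sym, sin_antisym, cos_acos, sin_acos, Hs, Rabs_left by lra.
    destruct p, X; unfold x, y in *; simpl in *; f_equal; field; lra.
Qed.

Lemma polar_angle_shift (X : point) r t (k : Z) :
  polar_pt X r (t + 2 * PI * IZR k) = polar_pt X r t.
Proof. unfold polar_pt; destruct (trig_period_Z t k) as [-> ->]; reflexivity. Qed.

Lemma polar_coords_after (X p : point) (t0 : R) : p <> X ->
  exists r t, 0 < r /\ t0 < t <= t0 + 2 * PI /\ p = polar_pt X r t.
Proof.
  intros Hp; destruct (polar_coords X p Hp) as (r & t & Hr & ->).
  pose proof PI_RGT_0.
  set (k := up ((t0 - t) / (2 * PI))).
  destruct (archimed ((t0 - t) / (2 * PI))) as [Hk1 Hk2]; fold k in Hk1, Hk2.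
  exists r, (t + 2 * PI * IZR k); rewrite polar_angle_shift; split; [|split]; auto.
  assert (E : (t0 - t) / (2 * PI) * (2 * PI) = t0 - t) by (field; lra).
  split; nra.
Qed.

Definition orient (X p q : point) : R :=
  (fst p - fst X) * (snd q - snd X) - (snd p - snd X) * (fst q - fst X).

Definition two_of_three (x y z : R) : Prop :=
  (0 < x /\ 0 < y) \/ (0 < y /\ 0 < z) \/ (0 < z /\ 0 < x).

(* Any two of three quantities are cyclically adjacent, so this says that at
   least two of the three orientations [X a b], [X b c], [X c a] are positive. *)
Definition ccw_orient (X a b c : point) : Prop :=
  two_of_three (orient X a b) (orient X b c) (orient X c a).

Lemma two_of_three_scale k1 k2 k3 x y z : 0 < k1 -> 0 < k2 -> 0 < k3 ->
  two_of_three (k1 * x) (k2 * y) (k3 * z) <-> two_of_three x y z.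
Proof.
  intros H1 H2 H3.
  assert (P : forall k w, 0 < k -> (0 < k * w <-> 0 < w)).
  { intros k w Hk; split; intro Hw; [destruct (Rle_dec w 0); nra | nra]. }
  unfold two_of_three; rewrite (P k1), (P k2), (P k3) by auto; tauto.
Qed.

Lemma orient_polar X ra ta rb tb :
  orient X (polar_pt X ra ta) (polar_pt X rb tb) = ra * rb * sin (tb - ta).
Proof. unfold orient, polar_pt; simpl; rewrite sin_minus; ring. Qed.

Lemma ccw_orient_polar X ra ta rb tb rc tc : 0 < ra -> 0 < rb -> 0 < rc ->
  ccw_orient X (polar_pt X ra ta) (polar_pt X rb tb) (polar_pt X rc tc) <->
  two_of_three (sin (tb - ta)) (sin ((tc - ta) - (tb - ta))) (- sin (tc - ta)).
Proof.
  intros Ha Hb Hc; unfold ccw_orient; rewrite !orient_polar.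
  replace ((tc - ta) - (tb - ta)) with (tc - tb) by ring.
  replace (- sin (tc - ta)) with (sin (ta - tc)) by (rewrite <- sin_antisym; f_equal; ring).
  apply two_of_three_scale; nra.
Qed.

Lemma sin_two_of_three_iff u v : 0 < u <= 2 * PI -> 0 < v <= 2 * PI ->
  two_of_three (sin u) (sin (v - u)) (- sin v) <-> u < v < 2 * PI.
Proof.
  intros Hu Hv; pose proof PI_RGT_0.
  assert (E : forall w, sin (2 * PI - w) = - sin w).
  { intro w; rewrite sin_minus, sin_2PI, cos_2PI; ring. }
  split.
  - intros H2.
    destruct (Req_dec v (2 * PI)) as [->|Hv2].
    { rewrite E, sin_2PI in H2; unfold two_of_three in H2; lra. }
    destruct (Rlt_dec u v) as [Huv|Huv]; [lra | exfalso].
    rewrite <- (Ropp_involutive (sin (v - u))), <- sin_antisym in H2.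
    replace (- (v - u)) with (u - v) in H2 by ring.
    pose proof (E u).
    unfold two_of_three in H2.
    destruct (Rle_dec v PI), (Rle_dec (u - v) PI);
      [ assert (0 <= sin v) by (apply sin_ge_0; lra);
        assert (0 <= sin (u - v)) by (apply sin_ge_0; lra)
      | assert (0 <= sin v) by (apply sin_ge_0; lra);
        assert (0 <= sin (2 * PI - u)) by (apply sin_ge_0; lra)
      | assert (0 <= sin (u - v)) by (apply sin_ge_0; lra);
        assert (0 <= sin (2 * PI - u)) by (apply sin_ge_0; lra)
      | lra ]; lra.
  - intros Huv; unfold two_of_three; rewrite <- (E v).
    destruct (Rlt_dec u PI), (Rlt_dec (v - u) PI).
    + left; split; apply sin_gt_0; lra.
    + right; right; split; apply sin_gt_0; lra.
    + right; left; split; apply sin_gt_0; lra.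
    + lra.
Qed.

Lemma orient_center_l X q : orient X X q = 0.
Proof. unfold orient; ring. Qed.

Lemma orient_center_r X p : orient X p X = 0.
Proof. unfold orient; ring. Qed.

Lemma ccw_orient_neq_center X a b c : ccw_orient X a b c -> a <> X /\ b <> X /\ c <> X.
Proof.
  unfold ccw_orient, two_of_three; intros H.
  repeat split; intros ->; rewrite ?orient_center_l, ?orient_center_r in H; lra.
Qed.

Lemma ccw_between_iff_orient X a b c : ccw_between X a b c <-> ccw_orient X a b c.
Proof.
  split.
  - intros (ta & tb & tc & ra & rb & rc & Ha & Hb & Hc & -> & -> & -> & H1 & H2 & H3).
    apply (ccw_orient_polar X ra ta rb tb rc tc Ha Hb Hc), sin_two_of_three_iff; lra.
  - intros H; destruct (ccw_orient_neq_center X a b c H) as (Na & Nb & Nc).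
    destruct (polar_coords X a Na) as (ra & ta & Ha & ->).
    destruct (polar_coords_after X b ta Nb) as (rb & tb & Hb & Htb & ->).
    destruct (polar_coords_after X c ta Nc) as (rc & tc & Hc & Htc & ->).
    apply (ccw_orient_polar X ra ta rb tb rc tc Ha Hb Hc), sin_two_of_three_iff in H;
      [|lra|lra].
    exists ta, tb, tc, ra, rb, rc; repeat split; auto; lra.
Qed.

(** * Cyclic order on the boundary of a convex region *)

Definition affine (f : point -> R) : Prop :=
  exists w1 w2 c0, forall Z, f Z = w1 * fst Z + w2 * snd Z + c0.

(* Barycentric expansion of an affine function. *)
Lemma orient_affine_expansion f X a b c : affine f ->
  orient a b c * f X = orient X b c * f a + orient X c a * f b + orient X a b * f c.
Proof. intros (w1 & w2 & c0 & Hf); rewrite !Hf; unfold orient; ring. Qed.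

Lemma orient_rotate a b c : orient b c a = orient a b c.
Proof. unfold orient; ring. Qed.

Lemma orient_pos_on_line f X a b c : affine f -> 0 < f X -> 0 <= f a -> 0 <= f b -> f c = 0 ->
  0 < orient a b c -> 0 < orient X b c \/ 0 < orient X c a.
Proof.
  intros Hf HX Ha Hb Hc Habc.
  pose proof (orient_affine_expansion f X a b c Hf) as E; rewrite Hc in E.
  destruct (Rlt_dec 0 (orient X b c)), (Rlt_dec 0 (orient X c a)); auto.
  nra.
Qed.

Lemma orient_neg_on_line f X a b c : affine f -> 0 < f X -> 0 <= f a -> 0 <= f b -> f c = 0 ->
  orient a b c < 0 -> ~ (0 < orient X b c /\ 0 < orient X c a).
Proof.
  intros Hf HX Ha Hb Hc Habc [P Q].
  pose proof (orient_affine_expansion f X a b c Hf) as E; rewrite Hc in E.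
  nra.
Qed.

Lemma orient_same_side f X Y p q : affine f -> f p = 0 -> f q = 0 -> 0 < f X -> 0 < f Y ->
  (0 < orient X p q <-> 0 < orient Y p q).
Proof.
  intros Hf Hp Hq HX HY.
  pose proof (orient_affine_expansion f X Y p q Hf) as E; rewrite Hp, Hq in E.
  split; intro H; nra.
Qed.

Lemma collinear_param a b c : orient a b c = 0 -> a <> b ->
  exists mu, c = (fst a + mu * (fst b - fst a), snd a + mu * (snd b - snd a)).
Proof.
  intros Habc Hab.
  set (u1 := fst b - fst a); set (u2 := snd b - snd a).
  assert (Hu : 0 < u1 * u1 + u2 * u2).
  { destruct (Req_dec u1 0), (Req_dec u2 0).
    - exfalso; apply Hab; destruct a, b; unfold u1, u2 in *; simpl in *; f_equal; lra.
    - assert (0 < u2 * u2) by (apply Rsqr_pos_lt; auto); nra.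
    - assert (0 < u1 * u1) by (apply Rsqr_pos_lt; auto); nra.
    - assert (0 < u1 * u1) by (apply Rsqr_pos_lt; auto); nra. }
  exists (((fst c - fst a) * u1 + (snd c - snd a) * u2) / (u1 * u1 + u2 * u2)).
  unfold orient in Habc; fold u1 u2 in Habc.
  pose proof (f_equal (Rmult u1) Habc); pose proof (f_equal (Rmult u2) Habc).
  destruct c as [c1 c2]; simpl in *; f_equal; field_simplify_eq; lra.
Qed.

Lemma affine_on_line f a b mu : affine f ->
  f (fst a + mu * (fst b - fst a), snd a + mu * (snd b - snd a)) = f a + mu * (f b - f a).
Proof. intros (w1 & w2 & c0 & Hf); rewrite !Hf; simpl; ring. Qed.

Lemma ccw_orient_degenerate X a b c : a = b \/ b = c \/ c = a -> ~ ccw_orient X a b c.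
Proof.
  intros H; unfold ccw_orient, two_of_three, orient.
  destruct H as [<-|[<-|<-]]; lra.
Qed.

Section ConvexRegion.

Variable h : nat -> point -> R.
Hypothesis h_affine : forall k, affine (h k).

Definition on_region_boundary (p : point) : Prop :=
  (forall k, 0 <= h k p) /\ exists k, h k p = 0.

Definition in_region_interior (p : point) : Prop := forall k, 0 < h k p.

Lemma ccw_orient_of_orient_pos X a b c :
  on_region_boundary a -> on_region_boundary b -> on_region_boundary c ->
  in_region_interior X -> 0 < orient a b c -> ccw_orient X a b c.
Proof.
  intros [Ka [ka Za]] [Kb [kb Zb]] [Kc [kc Zc]] HX H.
  pose proof (orient_pos_on_line (h kc) X a b c (h_affine kc) (HX kc) (Ka kc) (Kb kc) Zc H).
  rewrite <- orient_rotate in H.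
  pose proof (orient_pos_on_line (h ka) X b c a (h_affine ka) (HX ka) (Kb ka) (Kc ka) Za H).
  rewrite <- orient_rotate in H.
  pose proof (orient_pos_on_line (h kb) X c a b (h_affine kb) (HX kb) (Kc kb) (Ka kb) Zb H).
  unfold ccw_orient, two_of_three; tauto.
Qed.

Lemma not_ccw_orient_of_orient_neg X a b c :
  on_region_boundary a -> on_region_boundary b -> on_region_boundary c ->
  in_region_interior X -> orient a b c < 0 -> ~ ccw_orient X a b c.
Proof.
  intros [Ka [ka Za]] [Kb [kb Zb]] [Kc [kc Zc]] HX H.
  pose proof (orient_neg_on_line (h kc) X a b c (h_affine kc) (HX kc) (Ka kc) (Kb kc) Zc H).
  rewrite <- orient_rotate in H.
  pose proof (orient_neg_on_line (h ka) X b c a (h_affine ka) (HX ka) (Kb ka) (Kc ka) Za H).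
  rewrite <- orient_rotate in H.
  pose proof (orient_neg_on_line (h kb) X c a b (h_affine kb) (HX kb) (Kc kb) (Ka kb) Zb H).
  unfold ccw_orient, two_of_three; tauto.
Qed.

(* The edge line through the middle one of the three points contains the other
   two: [h k] is affine along the line, nonnegative at the outer points and zero
   at the middle one. *)
Lemma collinear_boundary_common_line a b c :
  on_region_boundary a -> on_region_boundary b -> on_region_boundary c ->
  orient a b c = 0 -> a <> b -> b <> c -> c <> a ->
  exists k, h k a = 0 /\ h k b = 0 /\ h k c = 0.
Proof.
  intros [Ka [ka Za]] [Kb [kb Zb]] [Kc [kc Zc]] Habc Hab Hbc Hca.
  destruct (collinear_param a b c Habc Hab) as [mu Emu].
  assert (Hf : forall k, h k c = h k a + mu * (h k b - h k a))
    by (intro k; rewrite Emu; apply affine_on_line, h_affine).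
  assert (Hmu0 : mu <> 0)
    by (intros ->; apply Hca; rewrite Emu; destruct a; simpl; f_equal; ring).
  assert (Hmu1 : mu <> 1)
    by (intros ->; apply Hbc; rewrite Emu; destruct b; simpl; f_equal; ring).
  destruct (Rlt_dec mu 0); [|destruct (Rlt_dec mu 1)].
  - exists ka; pose proof (Hf ka); pose proof (Kb ka); pose proof (Kc ka); nra.
  - exists kc; pose proof (Hf kc); pose proof (Ka kc); pose proof (Kb kc); nra.
  - exists kb; pose proof (Hf kb); pose proof (Ka kb); pose proof (Kc kb); nra.
Qed.

Lemma ccw_orient_boundary_invariant X Y a b c :
  on_region_boundary a -> on_region_boundary b -> on_region_boundary c ->
  in_region_interior X -> in_region_interior Y ->
  (ccw_orient X a b c <-> ccw_orient Y a b c).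
Proof.
  intros Ha Hb Hc HX HY.
  destruct (Rtotal_order (orient a b c) 0) as [Hn|[Hz|Hp]].
  - pose proof (not_ccw_orient_of_orient_neg X a b c Ha Hb Hc HX Hn).
    pose proof (not_ccw_orient_of_orient_neg Y a b c Ha Hb Hc HY Hn); tauto.
  - destruct (classic (a = b \/ b = c \/ c = a)) as [Hd|Hd].
    + pose proof (ccw_orient_degenerate X a b c Hd).
      pose proof (ccw_orient_degenerate Y a b c Hd); tauto.
    + destruct (collinear_boundary_common_line a b c Ha Hb Hc Hz) as (k & Za & Zb & Zc);
        try tauto.
      pose proof (orient_same_side (h k) X Y a b (h_affine k) Za Zb (HX k) (HY k)).
      pose proof (orient_same_side (h k) X Y b c (h_affine k) Zb Zc (HX k) (HY k)).
      pose proof (orient_same_side (h k) X Y c a (h_affine k) Zc Za (HX k) (HY k)).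
      unfold ccw_orient, two_of_three; tauto.
  - pose proof (ccw_orient_of_orient_pos X a b c Ha Hb Hc HX Hp).
    pose proof (ccw_orient_of_orient_pos Y a b c Ha Hb Hc HY Hp); tauto.
Qed.

End ConvexRegion.

Lemma on_segment_affine u v x : on_segment u v x ->
  exists t, 0 <= t <= 1 /\ forall f, affine f -> f x = (1 - t) * f u + t * f v.
Proof.
  intros (t & Ht & ->); exists t; split; auto.
  intros f (w1 & w2 & c0 & Hf); rewrite !Hf; simpl; ring.
Qed.

Lemma on_segment_affine_ne_end u v x : on_segment u v x -> x <> v ->
  exists t, 0 <= t < 1 /\ forall f, affine f -> f x = (1 - t) * f u + t * f v.
Proof.
  intros Hx Hxv; destruct (on_segment_affine u v x Hx) as (t & Ht & Hf).
  exists t; split; auto.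
  destruct (Req_dec t 1) as [E|]; [|lra].
  exfalso; apply Hxv.
  assert (Hx1 : affine fst) by (exists 1, 0, 0; intro Z; ring).
  assert (Hx2 : affine snd) by (exists 0, 1, 0; intro Z; ring).
  pose proof (Hf fst Hx1); pose proof (Hf snd Hx2); rewrite E in *.
  destruct x, v; simpl in *; f_equal; lra.
Qed.

(** * The smallest enclosing disk *)

Lemma dist2_nonneg p q : 0 <= dist2 p q.
Proof. unfold dist2; apply Rplus_le_le_0_compat; apply pow2_ge_0. Qed.

Lemma dist2_eq0 p q : dist2 p q = 0 -> p = q.
Proof.
  unfold dist2; intros H.
  pose proof (pow2_ge_0 (fst p - fst q)); pose proof (pow2_ge_0 (snd p - snd q)).
  destruct p, q; simpl in *; f_equal; nra.
Qed.

Lemma dist2_shift (O p : point) d1 d2 e :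
  dist2 (fst O + e * d1, snd O + e * d2) p =
  dist2 O p - 2 * e * (d1 * (fst p - fst O) + d2 * (snd p - snd O))
  + e * e * (d1 * d1 + d2 * d2).
Proof. unfold dist2; simpl; ring. Qed.

Lemma uniform_small_param (L : list point) (Q : point -> R -> Prop) :
  (forall p, In p L -> exists g, 0 < g /\ forall e, 0 < e <= g -> Q p e) ->
  exists g, 0 < g /\ forall e, 0 < e <= g -> forall p, In p L -> Q p e.
Proof.
  induction L as [|x L IH]; intros H.
  - exists 1; split; [lra|]; intros e _ p [].
  - destruct IH as (g1 & G1 & H1); [intros; apply H; right; auto|].
    destruct (H x (or_introl eq_refl)) as (g2 & G2 & H2).
    exists (Rmin g1 g2); split; [apply Rmin_pos; auto|].
    pose proof (Rmin_l g1 g2); pose proof (Rmin_r g1 g2).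
    intros e He p [<-|Hp]; [apply H2 | apply H1; auto]; lra.
Qed.

Lemma list_max_lt (L : list point) (f : point -> R) B :
  (forall p, In p L -> f p < B) -> exists M, M < B /\ forall p, In p L -> f p <= M.
Proof.
  induction L as [|x L IH]; intros H.
  - exists (B - 1); split; [lra|]; intros p [].
  - destruct IH as (M & HM & H1); [intros; apply H; right; auto|].
    exists (Rmax M (f x)); split.
    + apply Rmax_lub_lt; auto; apply H; left; auto.
    + intros p [<-|Hp]; [apply Rmax_r|].
      eapply Rle_trans; [apply H1; auto | apply Rmax_l].
Qed.

Lemma small_perturbation_pos a b : 0 < a ->
  exists g, 0 < g /\ forall e, 0 < e <= g -> 0 < a - e * b.
Proof.
  intros Ha; exists (a / (Rabs b + 1)).
  pose proof (Rabs_pos b); pose proof (Rle_abs b).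
  split; [apply Rdiv_lt_0_compat; lra|].
  intros e [He1 He2].
  assert (E : a / (Rabs b + 1) * (Rabs b + 1) = a) by (field; lra).
  assert (e * (Rabs b + 1) <= a) by (rewrite <- E; apply Rmult_le_compat_r; lra).
  nra.
Qed.

Lemma shift_center_closer (O p : point) r d1 d2 : dist2 O p <= r * r ->
  dist2 O p < r * r \/ 0 < d1 * (fst p - fst O) + d2 * (snd p - snd O) ->
  exists g, 0 < g /\ forall e, 0 < e <= g ->
    dist2 (fst O + e * d1, snd O + e * d2) p < r * r.
Proof.
  intros Hle Hp.
  set (nd := d1 * d1 + d2 * d2) in *; set (D := dist2 O p) in *.
  set (s := d1 * (fst p - fst O) + d2 * (snd p - snd O)) in *.
  assert (Hnd : 0 <= nd) by (unfold nd; nra).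
  pose proof (Rabs_pos s); pose proof (Rle_abs (- s)); rewrite Rabs_Ropp in *.
  destruct Hp as [A|A].
  - set (K := 2 * Rabs s + nd + 1).
    exists (Rmin 1 ((r * r - D) / K)); split.
    { apply Rmin_pos; [lra|]; apply Rdiv_lt_0_compat; unfold K; lra. }
    intros e He; rewrite dist2_shift; fold nd D s.
    pose proof (Rmin_l 1 ((r * r - D) / K)); pose proof (Rmin_r 1 ((r * r - D) / K)).
    assert (e * K <= r * r - D).
    { assert (E : (r * r - D) / K * K = r * r - D) by (unfold K; field; lra).
      assert (e * K <= (r * r - D) / K * K) by (apply Rmult_le_compat_r; [unfold K | ]; lra).
      lra. }
    assert (e * e * nd <= e * nd) by (apply Rmult_le_compat_r; nra).
    assert (- (2 * e * s) <= 2 * e * Rabs s) by nra.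
    unfold K in *; nra.
  - exists (s / (nd + 1)); split; [apply Rdiv_lt_0_compat; lra|].
    intros e He; rewrite dist2_shift; fold nd D s.
    assert (E : s / (nd + 1) * (nd + 1) = s) by (field; lra).
    assert (e * (nd + 1) <= s / (nd + 1) * (nd + 1)) by (apply Rmult_le_compat_r; lra).
    nra.
Qed.

Lemma SED_center_not_improvable (pts : list point) O r d1 d2 : 0 <= r -> pts <> nil ->
  (forall p, In p pts -> dist2 O p <= r * r) ->
  (forall (c : point) (r' : R), 0 <= r' -> (forall p, In p pts -> dist2 c p <= r' * r') -> r <= r') ->
  ~ (forall p, In p pts -> dist2 O p < r * r \/ 0 < d1 * (fst p - fst O) + d2 * (snd p - snd O)).
Proof.
  intros Hr Hne Hcov Hmin Hp.
  destruct (uniform_small_param pts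
              (fun p e => dist2 (fst O + e * d1, snd O + e * d2) p < r * r)) as (g & Hg & Hge).
  { intros p Hin; exact (shift_center_closer O p r d1 d2 (Hcov p Hin) (Hp p Hin)). }
  set (O' := (fst O + g * d1, snd O + g * d2)).
  destruct (list_max_lt pts (dist2 O') (r * r)) as (M & HM & HMp).
  { intros p Hin; apply Hge; auto; lra. }
  destruct pts as [|p0 pts']; [congruence|].
  assert (HM0 : 0 <= M) by (eapply Rle_trans; [apply dist2_nonneg | apply (HMp p0); left; auto]).
  assert (Hs : r <= sqrt M).
  { apply (Hmin O'); [apply sqrt_pos|].
    intros p Hin; rewrite sqrt_sqrt by auto; apply HMp; auto. }
  assert (sqrt M < r) by (rewrite <- (sqrt_square r) by auto; apply sqrt_lt_1; nra).
  lra.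
Qed.


(* In coordinates where the edge line is [x = R c] and the edge is
   [-R s <= y <= R s] ([c = cos theta], [s = sin theta]): a disk centred on the
   edge line with diameter inside the edge misses every point outside the
   inscribed circle whose abscissa is at most [R cos (3 theta)].  This needs
   [cos theta >= 0.8], i.e. at least five sides. *)
Lemma disk_on_edge_misses_far_point R c s xi ze z r :
  0 < R -> 0.8 <= c -> 0 < s -> s * s + c * c = 1 ->
  xi <= R * (4 * c ^ 3 - 3 * c) -> R * R * (c * c) <= xi * xi + ze * ze ->
  0 <= r -> - (R * s) <= z - r -> z + r <= R * s ->
  r * r < (R * c - xi) ^ 2 + (z - ze) ^ 2.
Proof.
  intros HR Hc Hs Hsc Hxi Hn Hr Hz1 Hz2.
  set (c3 := 4 * c ^ 3 - 3 * c) in *.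
  assert (Hc1 : c <= 1) by nra.
  assert (c3 < c) by (unfold c3; nra).
  assert (Hss : s * s <= c * c) by nra.
  assert (r * r <= R * s * (R * s)) by nra.
  destruct (Rlt_dec xi 0) as [Hneg|Hpos].
  - assert (0 < R * c) by nra.
    assert (R * c * (R * c) < (R * c - xi) ^ 2) by nra.
    assert (R * s * (R * s) <= R * c * (R * c)) by nra.
    pose proof (pow2_ge_0 (z - ze)); lra.
  - assert (0 <= c3) by nra.
    assert (xi * xi <= R * c3 * (R * c3)) by nra.
    assert (Hpoly : s * s <= c * c - c3 * c3).
    { replace (s * s) with (1 - c * c) by lra.
      set (y := c * c).
      assert (0.64 <= y <= 1) by (unfold y; nra).
      replace (c3 * c3) with (y * (4 * y - 3) * (4 * y - 3)) by (unfold c3, y; ring).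
      assert (-16 * y * y + 8 * y + 1 <= 0) by nra.
      nra. }
    assert (Hze : R * s * (R * s) <= ze * ze) by nra.
    assert (0 < (R * c - xi) ^ 2) by (assert (0 < R * c - xi) by nra; nra).
    assert (r * r <= (z - ze) ^ 2).
    { destruct (Rle_dec 0 ze).
      - assert (R * s <= ze) by nra; assert (r <= ze - z) by lra; nra.
      - assert (ze <= - (R * s)) by nra; assert (r <= z - ze) by lra; nra. }
    lra.
Qed.


(** * The supporting polygon *)

Section RegularPolygon.

Variable n : nat.
Hypothesis n_gt4 : (4 < n)%nat.

Definition theta : R := PI / INR n.

Lemma INR_n_ge5 : 5 <= INR n.
Proof. replace 5 with (INR 5) by (simpl; ring). apply le_INR; lia. Qed.

Lemma theta_pos : 0 < theta.
Proof. unfold theta; pose proof INR_n_ge5; pose proof PI_RGT_0; apply Rdiv_lt_0_compat; lra. Qed.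

Lemma theta_mul_n : theta * INR n = PI.
Proof. unfold theta; pose proof INR_n_ge5; field; lra. Qed.

Lemma theta_le_PI5 : theta <= PI / 5.
Proof.
  unfold theta; pose proof INR_n_ge5; pose proof PI_RGT_0.
  apply Rmult_le_compat_l; [lra|]. apply Rinv_le_contravar; lra.
Qed.

Lemma cos_3theta_lt : cos (3 * theta) < cos theta.
Proof.
  pose proof theta_pos; pose proof theta_le_PI5; pose proof PI_RGT_0.
  apply cos_decreasing_1; lra.
Qed.

(* [m] is congruent to 0 or 1 modulo [n]: vertex [i] lies on edge [k] exactly
   when [i - k] is. *)
Definition mod_n_is_0_or_1 (m : Z) : Prop :=
  exists t : Z, m = (Z.of_nat n * t)%Z \/ m = (Z.of_nat n * t + 1)%Z.

Lemma cos_odd_theta_mod (m : Z) :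
  cos ((2 * IZR m - 1) * theta) = cos ((2 * IZR (m mod Z.of_nat n) - 1) * theta).
Proof.
  assert (HN : (0 < Z.of_nat n)%Z) by lia.
  rewrite (Z.div_mod m (Z.of_nat n)) at 1 by lia.
  rewrite plus_IZR, mult_IZR, <- INR_IZR_INZ.
  replace ((2 * (INR n * IZR (m / Z.of_nat n) + IZR (m mod Z.of_nat n)) - 1) * theta)
    with ((2 * IZR (m mod Z.of_nat n) - 1) * theta + 2 * PI * IZR (m / Z.of_nat n))
    by (rewrite <- theta_mul_n; ring).
  apply trig_period_Z.
Qed.

Lemma cos_odd_theta_le_cos3 (m : Z) : ~ mod_n_is_0_or_1 m ->
  cos ((2 * IZR m - 1) * theta) <= cos (3 * theta).
Proof.
  intros Hm; rewrite cos_odd_theta_mod.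
  pose proof theta_pos; pose proof theta_mul_n; pose proof PI_RGT_0; pose proof INR_n_ge5.
  set (r := (m mod Z.of_nat n)%Z).
  assert (Hr : (0 <= r < Z.of_nat n)%Z) by (apply Z.mod_pos_bound; lia).
  assert (Hr2 : (2 <= r)%Z).
  { destruct (Z.eq_dec r 0) as [E|E]; [|destruct (Z.eq_dec r 1) as [E1|E1]; [|lia]];
      exfalso; apply Hm; exists (m / Z.of_nat n)%Z;
      [left | right]; rewrite (Z.div_mod m (Z.of_nat n)) at 1 by lia; fold r; lia. }
  assert (HrR : 2 <= IZR r) by (apply IZR_le; lia).
  assert (HrN : IZR r + 1 <= INR n)
    by (rewrite INR_IZR_INZ, <- plus_IZR; apply IZR_le; lia).
  destruct (Rle_dec (2 * IZR r - 1) (INR n)).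
  - apply cos_antitone; nra.
  - rewrite (cos_sym ((2 * IZR r - 1) * theta)), <- (cos_add_2PI (- ((2 * IZR r - 1) * theta))).
    replace (- ((2 * IZR r - 1) * theta) + 2 * PI) with ((2 * INR n - 2 * IZR r + 1) * theta)
      by (rewrite <- theta_mul_n; ring).
    apply cos_antitone; nra.
Qed.

Lemma cos_odd_theta_le (m : Z) : cos ((2 * IZR m - 1) * theta) <= cos theta.
Proof.
  destruct (classic (mod_n_is_0_or_1 m)) as [[t [E|E]]|Hm].
  - rewrite E, mult_IZR, <- INR_IZR_INZ.
    replace ((2 * (INR n * IZR t) - 1) * theta) with (- theta + 2 * PI * IZR t)
      by (rewrite <- theta_mul_n; ring).
    rewrite (proj1 (trig_period_Z _ _)), <- cos_sym; lra.
  - rewrite E, plus_IZR, mult_IZR, <- INR_IZR_INZ.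
    replace ((2 * (INR n * IZR t + 1) - 1) * theta) with (theta + 2 * PI * IZR t)
      by (rewrite <- theta_mul_n; ring).
    rewrite (proj1 (trig_period_Z _ _)); lra.
  - pose proof (cos_odd_theta_le_cos3 m Hm); pose proof cos_3theta_lt; lra.
Qed.

Lemma mod_n_0_or_1_antisym (j1 j2 : nat) : (j1 < n)%nat -> (j2 < n)%nat ->
  mod_n_is_0_or_1 (Z.of_nat j1 - Z.of_nat j2) ->
  mod_n_is_0_or_1 (Z.of_nat j2 - Z.of_nat j1) -> j1 = j2.
Proof.
  intros H1 H2 [t A] [t' B].
  destruct (Z_lt_le_dec t 0); [|destruct (Z_lt_le_dec 0 t)];
  (destruct (Z_lt_le_dec t' 0); [|destruct (Z_lt_le_dec 0 t')]); nia.
Qed.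

Variable C : point.
Variables Rad phi : R.
Hypothesis Rad_pos : 0 < Rad.

Definition vertex (i : nat) : point := vtx C Rad phi n i.

(* Direction of the outer normal of edge [k], i.e. of the midpoint of
   [vertex k] and [vertex (k + 1)]. *)
Definition normal_angle (k : nat) : R := phi + 2 * PI * INR k / INR n + theta.

Definition normal_coord (k : nat) (X : point) : R :=
  (fst X - fst C) * cos (normal_angle k) + (snd X - snd C) * sin (normal_angle k).

Definition tangent_coord (k : nat) (X : point) : R :=
  - (fst X - fst C) * sin (normal_angle k) + (snd X - snd C) * cos (normal_angle k).

(* Edge [k] lies on the line [edge_slack k = 0], at distance [Rad * cos theta]
   from [C]; the polygon is the intersection of the half-planes [0 <= edge_slack k]. *)
Definition edge_slack (k : nat) (X : point) : R := Rad * cos theta - normal_coord k X.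

Lemma normal_coord_affine k : affine (normal_coord k).
Proof.
  exists (cos (normal_angle k)), (sin (normal_angle k)),
    (- fst C * cos (normal_angle k) - snd C * sin (normal_angle k)).
  intro Z; unfold normal_coord; ring.
Qed.

Lemma edge_slack_affine k : affine (edge_slack k).
Proof.
  destruct (normal_coord_affine k) as (w1 & w2 & c0 & Hf).
  exists (- w1), (- w2), (Rad * cos theta - c0); intro Z; unfold edge_slack; rewrite Hf; ring.
Qed.

Lemma normal_coord_vertex i k :
  normal_coord k (vertex i) = Rad * cos ((2 * IZR (Z.of_nat i - Z.of_nat k) - 1) * theta).
Proof.
  unfold normal_coord, vertex, vtx; simpl; rewrite minus_IZR, <- !INR_IZR_INZ.
  replace ((2 * (INR i - INR k) - 1) * theta)
    with ((phi + 2 * PI * INR i / INR n) - normal_angle k).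
  - rewrite cos_minus; ring.
  - unfold normal_angle, theta; pose proof INR_n_ge5; field; lra.
Qed.

Lemma edge_slack_vertex_nonneg i k : 0 <= edge_slack k (vertex i).
Proof.
  unfold edge_slack; rewrite normal_coord_vertex.
  pose proof (cos_odd_theta_le (Z.of_nat i - Z.of_nat k)); nra.
Qed.

Lemma edge_slack_vertex_zero i k : edge_slack k (vertex i) = 0 ->
  mod_n_is_0_or_1 (Z.of_nat i - Z.of_nat k).
Proof.
  unfold edge_slack; rewrite normal_coord_vertex; intros H.
  apply NNPP; intros Hm.
  pose proof (cos_odd_theta_le_cos3 _ Hm); pose proof cos_3theta_lt; nra.
Qed.

Lemma edge_slack_vertex_self k : edge_slack k (vertex k) = 0.
Proof.
  unfold edge_slack; rewrite normal_coord_vertex, Z.sub_diag.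
  replace ((2 * IZR 0 - 1) * theta) with (- theta) by (simpl; ring).
  rewrite <- cos_sym; ring.
Qed.

Lemma edge_slack_vertex_succ k : edge_slack k (vertex (S k)) = 0.
Proof.
  unfold edge_slack; rewrite normal_coord_vertex.
  replace (Z.of_nat (S k) - Z.of_nat k)%Z with 1%Z by lia.
  replace ((2 * IZR 1 - 1) * theta) with theta by (simpl; ring); ring.
Qed.

Lemma vertex_add_n i : vertex (i + n) = vertex i.
Proof.
  unfold vertex, vtx.
  replace (phi + 2 * PI * INR (i + n) / INR n) with ((phi + 2 * PI * INR i / INR n) + 2 * PI)
    by (rewrite plus_INR; pose proof INR_n_ge5; field; lra).
  rewrite cos_add_2PI, sin_add_2PI; reflexivity.
Qed.

Lemma vertex_neq_succ j : vertex j <> vertex (S j).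
Proof.
  intros E; pose proof (edge_slack_vertex_self (S j)) as H; rewrite <- E in H.
  destruct (edge_slack_vertex_zero _ _ H) as [t A].
  destruct (Z_lt_le_dec t 0); [|destruct (Z_lt_le_dec 0 t)]; nia.
Qed.

Definition on_edge (j : nat) (x : point) : Prop := on_segment (vertex j) (vertex (S j)) x.

(* Edges are taken half-open, without their last vertex, so that they
   partition the boundary. *)
Definition on_halfopen_edge (j : nat) (x : point) : Prop := on_edge j x /\ x <> vertex (S j).

Lemma on_edge_slack j x : on_edge j x -> (forall k, 0 <= edge_slack k x) /\ edge_slack j x = 0.
Proof.
  intros H; destruct (on_segment_affine _ _ _ H) as (t & Ht & Hx); split.
  - intro k; rewrite (Hx _ (edge_slack_affine k)).
    pose proof (edge_slack_vertex_nonneg j k); pose proof (edge_slack_vertex_nonneg (S j) k).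
    nra.
  - rewrite (Hx _ (edge_slack_affine j)), edge_slack_vertex_self, edge_slack_vertex_succ; ring.
Qed.

Lemma vertex_on_halfopen_edge j : on_halfopen_edge j (vertex j).
Proof.
  split; [|apply vertex_neq_succ].
  exists 0; split; [lra|]; destruct (vertex j), (vertex (S j)); simpl; f_equal; ring.
Qed.

Lemma on_halfopen_edge_start j1 j2 x : on_halfopen_edge j1 x -> on_edge j2 x ->
  edge_slack j2 (vertex j1) = 0.
Proof.
  intros [H1 Hne] H2.
  destruct (on_segment_affine_ne_end _ _ _ H1 Hne) as (t & Ht & Hx).
  destruct (on_edge_slack _ _ H2) as [_ Z2]; rewrite (Hx _ (edge_slack_affine j2)) in Z2.
  pose proof (edge_slack_vertex_nonneg j1 j2); pose proof (edge_slack_vertex_nonneg (S j1) j2).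
  nra.
Qed.

Lemma halfopen_edges_disjoint j1 j2 x : (j1 < n)%nat -> (j2 < n)%nat ->
  on_halfopen_edge j1 x -> on_halfopen_edge j2 x -> j1 = j2.
Proof.
  intros L1 L2 H1 H2.
  apply mod_n_0_or_1_antisym; auto; apply edge_slack_vertex_zero.
  - exact (on_halfopen_edge_start j1 j2 x H1 (proj1 H2)).
  - exact (on_halfopen_edge_start j2 j1 x H2 (proj1 H1)).
Qed.

Lemma on_halfopen_edge_n x : on_halfopen_edge n x <-> on_halfopen_edge 0 x.
Proof.
  unfold on_halfopen_edge, on_edge.
  rewrite <- (vertex_add_n 0), <- (vertex_add_n 1); simpl; tauto.
Qed.

Definition on_halfopen_edgeb (j : nat) (x : point) : bool :=
  if excluded_middle_informative (on_halfopen_edge j x) then true else false.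

Lemma on_halfopen_edgeb_spec j x : on_halfopen_edgeb j x = true <-> on_halfopen_edge j x.
Proof.
  unfold on_halfopen_edgeb.
  destruct (excluded_middle_informative (on_halfopen_edge j x)); split; auto; discriminate.
Qed.

Lemma on_halfopen_edgeb_n x : on_halfopen_edgeb n x = on_halfopen_edgeb 0 x.
Proof.
  unfold on_halfopen_edgeb.
  destruct (excluded_middle_informative (on_halfopen_edge n x)) as [H|H],
    (excluded_middle_informative (on_halfopen_edge 0 x)) as [H'|H']; auto;
    exfalso; [apply H' | apply H]; apply on_halfopen_edge_n; auto.
Qed.

Lemma dist2_frame k X Y : dist2 X Y =
  (normal_coord k X - normal_coord k Y) ^ 2 + (tangent_coord k X - tangent_coord k Y) ^ 2.
Proof.
  unfold dist2, normal_coord, tangent_coord.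
  pose proof (sin2_cos2 (normal_angle k)) as H; unfold Rsqr in H.
  transitivity (((fst X - fst Y) ^ 2 + (snd X - snd Y) ^ 2)
    * (sin (normal_angle k) * sin (normal_angle k) + cos (normal_angle k) * cos (normal_angle k)));
    [rewrite H|]; ring.
Qed.

Lemma frame_coords_inj k p q : normal_coord k p = normal_coord k q ->
  tangent_coord k p = tangent_coord k q -> p = q.
Proof.
  intros H1 H2; apply dist2_eq0; rewrite (dist2_frame k), H1, H2; ring.
Qed.

Lemma normal_coord_succ k X : normal_coord (S k) X =
  normal_coord k X * cos (2 * theta) + tangent_coord k X * sin (2 * theta).
Proof.
  assert (E : normal_angle (S k) = normal_angle k + 2 * theta).
  { unfold normal_angle, theta; rewrite S_INR; pose proof INR_n_ge5; field; lra. }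
  unfold normal_coord, tangent_coord; rewrite E, cos_plus, sin_plus; ring.
Qed.

Lemma normal_coord_pred k X : normal_coord (k + n - 1) X =
  normal_coord k X * cos (2 * theta) - tangent_coord k X * sin (2 * theta).
Proof.
  assert (E : normal_angle (k + n - 1) = (normal_angle k + - (2 * theta)) + 2 * PI).
  { unfold normal_angle, theta; rewrite minus_INR, plus_INR by lia; simpl.
    pose proof INR_n_ge5; field; lra. }
  unfold normal_coord, tangent_coord.
  rewrite E, cos_add_2PI, sin_add_2PI, cos_plus, sin_plus, <- cos_sym, sin_antisym; ring.
Qed.

Lemma cos_theta_ge : 0.8 <= cos theta.
Proof.
  pose proof cos_PI5_ge; pose proof theta_le_PI5; pose proof theta_pos.
  pose proof PI_RGT_0; pose proof (cos_antitone theta (PI / 5)); lra.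
Qed.

Lemma sin_theta_pos : 0 < sin theta.
Proof.
  pose proof theta_le_PI5; pose proof theta_pos; pose proof PI_RGT_0.
  apply sin_gt_0; lra.
Qed.

(* Between the two neighbouring edge lines, the edge line [k] is cut down to
   the edge itself, of half-length [Rad * sin theta]. *)
Lemma tangent_coord_bound k p : edge_slack k p = 0 ->
  0 <= edge_slack (S k) p -> 0 <= edge_slack (k + n - 1) p ->
  - (Rad * sin theta) <= tangent_coord k p <= Rad * sin theta.
Proof.
  unfold edge_slack; rewrite normal_coord_succ, normal_coord_pred, cos_2a_sin, sin_2a.
  intros H0 H1 H2.
  assert (Hx : normal_coord k p = Rad * cos theta) by lra; rewrite Hx in H1, H2.
  pose proof cos_theta_ge; pose proof sin_theta_pos.
  assert (0 < 2 * sin theta * cos theta) by nra.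
  split; nra.
Qed.

Section SupportingPoints.

Variable pts : list point.
Hypothesis pts_length : length pts = n.
Hypothesis pts_support : forall k, (k < n)%nat ->
  edge_has_exactly_two pts C Rad phi n k \/ edge_has_exactly_two pts C Rad phi n (S k).

Definition edge_count (j : nat) : nat := length (filter (on_halfopen_edgeb j) pts).

Lemma edge_count_pos j : edge_has_exactly_two pts C Rad phi n j -> (1 <= edge_count j)%nat.
Proof.
  intros (p & q & Hp & Hq & Hpq & Sp & Sq & _).
  destruct (classic (p = vertex (S j))) as [E|E].
  - apply (filter_length_ge1 _ _ q Hq), on_halfopen_edgeb_spec; split; auto; congruence.
  - apply (filter_length_ge1 _ _ p Hp), on_halfopen_edgeb_spec; split; auto.
Qed.

(* An empty half-open edge [j] does not contain [vertex j], so both points of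
   edge [j - 1] lie in the half-open edge [j - 1]. *)
Lemma edge_count_local j : (1 <= j <= n)%nat ->
  (1 <= edge_count j)%nat \/ (edge_count j = 0%nat /\ (2 <= edge_count (j - 1))%nat).
Proof.
  intros Hj; destruct j as [|j]; [lia|]; replace (S j - 1)%nat with j by lia.
  destruct (pts_support j ltac:(lia)) as [F|F]; [|left; apply edge_count_pos; exact F].
  destruct (le_lt_dec 1 (edge_count (S j))) as [A|A]; [left; exact A|right; split; [lia|]].
  destruct F as (p & q & Hp & Hq & Hpq & Sp & Sq & _).
  assert (NV : ~ In (vertex (S j)) pts).
  { intros HV; pose proof (filter_length_ge1 _ _ _ HV
      (proj2 (on_halfopen_edgeb_spec _ _) (vertex_on_halfopen_edge (S j)))).
    unfold edge_count in A; lia. }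
  apply (filter_length_ge2 _ _ p q Hp Hq Hpq); apply on_halfopen_edgeb_spec; split; auto;
    intros E; apply NV; rewrite <- E; auto.
Qed.

Lemma pts_on_some_edge x : In x pts -> exists j, on_edge j x.
Proof.
  intros Hx; apply NNPP; intros Hno.
  assert (Hge : (n <= nat_sum edge_count n)%nat).
  { apply cyclic_nat_sum_ge; [lia| |exact edge_count_local].
    unfold edge_count; f_equal; apply filter_ext, on_halfopen_edgeb_n. }
  assert (Hlt : (nat_sum edge_count n < length pts)%nat).
  { apply (nat_sum_filter_length_lt on_halfopen_edgeb n pts x); auto.
    - intros y _ j1 j2 L1 L2 B1 B2; apply on_halfopen_edgeb_spec in B1, B2.
      eapply halfopen_edges_disjoint; eauto.
    - intros j _; destruct (on_halfopen_edgeb j x) eqn:E; auto.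
      apply on_halfopen_edgeb_spec in E; exfalso; apply Hno; exists j; apply E. }
  lia.
Qed.

Lemma pts_on_region_boundary p : In p pts -> on_region_boundary edge_slack p.
Proof.
  intros Hp; destruct (pts_on_some_edge p Hp) as [j Hj].
  destruct (on_edge_slack j p Hj) as [K Z]; split; [exact K | exists j; exact Z].
Qed.

Lemma pts_in_polygon p : In p pts -> forall k, 0 <= edge_slack k p.
Proof. intros Hp; apply (pts_on_region_boundary p Hp). Qed.

Lemma not_mod_n_0_or_1_small (m q : Z) : (2 <= m + Z.of_nat n * q <= 4)%Z ->
  ~ mod_n_is_0_or_1 m.
Proof.
  intros Hm [t [E|E]]; destruct (Z_le_gt_dec (t + q) 0); nia.
Qed.

(* Edge [k + 2] or edge [k + 3] carries points of [pts]; neither of its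
   vertices lies on edge [k]. *)
Lemma far_edge_point k : exists j x, In x pts /\ on_edge j x /\
  ~ mod_n_is_0_or_1 (Z.of_nat j - Z.of_nat k) /\
  ~ mod_n_is_0_or_1 (Z.of_nat (S j) - Z.of_nat k).
Proof.
  set (k' := ((k + 2) mod n)%nat).
  assert (Hk' : (k' < n)%nat) by (apply Nat.mod_upper_bound; lia).
  assert (Hq : (k + 2 = n * ((k + 2) / n) + k')%nat) by (apply Nat.div_mod; lia).
  destruct (pts_support k' Hk') as [F|F]; [exists k' | exists (S k')];
    destruct F as (p & _ & Hp & _ & _ & Sp & _); exists p; repeat split; auto;
    apply (not_mod_n_0_or_1_small _ (Z.of_nat ((k + 2) / n))); lia.
Qed.

Lemma normal_coord_far_edge j k x :
  ~ mod_n_is_0_or_1 (Z.of_nat j - Z.of_nat k) ->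
  ~ mod_n_is_0_or_1 (Z.of_nat (S j) - Z.of_nat k) ->
  on_edge j x -> normal_coord k x <= Rad * cos (3 * theta).
Proof.
  intros Hj HSj Hx; destruct (on_segment_affine _ _ _ Hx) as (t & Ht & Hf).
  pose proof (cos_odd_theta_le_cos3 _ Hj) as Hj'.
  pose proof (cos_odd_theta_le_cos3 _ HSj) as HSj'.
  rewrite (Hf _ (normal_coord_affine k)).
  rewrite !normal_coord_vertex.
  apply (Rmult_le_compat_l Rad) in Hj' as A1, HSj' as A2; try lra.
  nra.
Qed.

Lemma on_edge_outside_incircle j k x : on_edge j x ->
  Rad * Rad * (cos theta * cos theta) <= normal_coord k x ^ 2 + tangent_coord k x ^ 2.
Proof.
  intros Hx; destruct (on_edge_slack j x Hx) as [_ Hj].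
  assert (Hn : normal_coord j x = Rad * cos theta) by (unfold edge_slack in Hj; lra).
  pose proof (dist2_frame j x C) as Ej; pose proof (dist2_frame k x C) as Ek.
  assert (HC : forall i, normal_coord i C = 0 /\ tangent_coord i C = 0)
    by (intro i; unfold normal_coord, tangent_coord; split; ring).
  rewrite (proj1 (HC j)), (proj2 (HC j)), Hn in Ej; rewrite (proj1 (HC k)), (proj2 (HC k)) in Ek.
  pose proof (pow2_ge_0 (tangent_coord j x)); nra.
Qed.

Section SEDCenter.

Variable O : point.
Variable r : R.
Hypothesis r_nonneg : 0 <= r.
Hypothesis O_covers : forall p, In p pts -> dist2 O p <= r * r.
Hypothesis O_minimal : forall (c : point) (r' : R), 0 <= r' ->
  (forall p, In p pts -> dist2 c p <= r' * r') -> r <= r'.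
Hypothesis O_notin : ~ In O pts.

Lemma pts_nonempty : pts <> nil.
Proof. intros E; rewrite E in pts_length; simpl in pts_length; lia. Qed.

Lemma SED_center_slack_nonneg k : 0 <= edge_slack k O.
Proof.
  apply Rnot_lt_le; intros Hlt.
  apply (SED_center_not_improvable pts O r (- cos (normal_angle k)) (- sin (normal_angle k))
    r_nonneg pts_nonempty O_covers O_minimal).
  intros p Hp; right.
  pose proof (pts_in_polygon p Hp k).
  unfold edge_slack, normal_coord in *; nra.
Qed.

(* Otherwise tilting the inward normal of edge [k] slightly towards [sg] would
   bring every point strictly inside. *)
Lemma SED_center_edge_line_extreme k sg : sg = 1 \/ sg = -1 -> edge_slack k O = 0 ->
  exists p, In p pts /\ edge_slack k p = 0 /\
    tangent_coord k p = tangent_coord k O + sg * r.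
Proof.
  intros Hsg H0; apply NNPP; intros Hno.
  set (z := tangent_coord k O).
  destruct (uniform_small_param pts (fun p e =>
      0 < edge_slack k p -> 0 < edge_slack k p - e * (sg * (tangent_coord k p - z))))
    as (g & Hg & Hge).
  { intros p _; destruct (Rlt_dec 0 (edge_slack k p)) as [P|P].
    - destruct (small_perturbation_pos _ (sg * (tangent_coord k p - z)) P) as (g & Hg & Hge).
      exists g; split; auto.
    - exists 1; split; [lra|]; intros e _ Hc; lra. }
  apply (SED_center_not_improvable pts O r
    (- cos (normal_angle k) + sg * g * sin (normal_angle k))
    (- sin (normal_angle k) - sg * g * cos (normal_angle k))
    r_nonneg pts_nonempty O_covers O_minimal).
  intros p Hp.
  replace (_ * (fst p - fst O) + _ * (snd p - snd O))
    with (edge_slack k p - edge_slack k O - g * (sg * (tangent_coord k p - z)))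
    by (unfold z, edge_slack, normal_coord, tangent_coord; ring).
  rewrite H0.
  destruct (Rlt_dec 0 (edge_slack k p)) as [P|P].
  { right; specialize (Hge g ltac:(lra) p Hp P); lra. }
  assert (Hz : edge_slack k p = 0) by (pose proof (pts_in_polygon p Hp k); lra).
  assert (Hn : normal_coord k p = normal_coord k O) by (unfold edge_slack in *; lra).
  assert (Hd : dist2 O p = (tangent_coord k p - z) ^ 2)
    by (rewrite (dist2_frame k), Hn; unfold z; ring).
  destruct (Rtotal_order (sg * (tangent_coord k p - z)) 0) as [N|[E|Pz]].
  - right; rewrite Hz; nra.
  - exfalso; apply O_notin.
    rewrite <- (frame_coords_inj k p O Hn); [exact Hp|].
    destruct Hsg as [-> | ->]; fold z; lra.
  - left; rewrite Hd; pose proof (O_covers p Hp) as Hc; rewrite Hd in Hc.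
    destruct Hc as [Hc|Hc]; [exact Hc|].
    exfalso; apply Hno; exists p; repeat split; auto.
    destruct Hsg as [-> | ->]; fold z; nra.
Qed.

Lemma SED_center_slack_pos k : 0 < edge_slack k O.
Proof.
  destruct (Rle_lt_or_eq_dec 0 (edge_slack k O) (SED_center_slack_nonneg k)) as [H|H]; [exact H|].
  exfalso; symmetry in H.
  destruct (SED_center_edge_line_extreme k 1 (or_introl eq_refl) H) as (pa & Ina & Za & Ea).
  destruct (SED_center_edge_line_extreme k (-1) (or_intror eq_refl) H) as (pb & Inb & Zb & Eb).
  destruct (tangent_coord_bound k pa Za (pts_in_polygon pa Ina (S k))
              (pts_in_polygon pa Ina (k + n - 1))) as [_ A1].
  destruct (tangent_coord_bound k pb Zb (pts_in_polygon pb Inb (S k))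
              (pts_in_polygon pb Inb (k + n - 1))) as [B1 _].
  destruct (far_edge_point k) as (j & x & Inx & Ex & T1 & T2).
  pose proof (O_covers x Inx) as Hc; rewrite (dist2_frame k) in Hc.
  assert (HO : normal_coord k O = Rad * cos theta) by (unfold edge_slack in H; lra).
  rewrite HO in Hc.
  pose proof (sin2_cos2 theta) as Hsc; unfold Rsqr in Hsc.
  pose proof (disk_on_edge_misses_far_point Rad (cos theta) (sin theta) (normal_coord k x)
    (tangent_coord k x) (tangent_coord k O) r Rad_pos cos_theta_ge sin_theta_pos ltac:(lra)
    ltac:(rewrite <- cos_triple; exact (normal_coord_far_edge j k x T1 T2 Ex))
    ltac:(pose proof (on_edge_outside_incircle j k x Ex); nra) r_nonneg ltac:(lra) ltac:(lra)).
  nra.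
Qed.

End SEDCenter.

End SupportingPoints.

Lemma center_slack_pos k : 0 < edge_slack k C.
Proof.
  unfold edge_slack, normal_coord; pose proof cos_theta_ge.
  replace (fst C - fst C) with 0 by ring; replace (snd C - snd C) with 0 by ring; nra.
Qed.

End RegularPolygon.

Theorem lemma5p9 (S : list point) (O C : point) (Rad phi : R) :
  NoDup S ->
  (4 < length S)%nat ->
  is_SED_center S O ->
  ~ In O S ->
  supporting_polygon S C Rad phi ->
  forall a b c, In a S -> In b S -> In c S ->
    (ccw_between O a b c <-> ccw_between C a b c).
Proof.
  intros _ Hn (r & Hr & Hcov & Hmin) HnO [HR Hsup] a b c Ha Hb Hc.
  set (n := length S) in *.
  assert (Hsup' : forall k, (k < n)%nat -> edge_has_exactly_two S C Rad phi n k \/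
                                          edge_has_exactly_two S C Rad phi n (Datatypes.S k))
    by (intros k Hk; destruct (Hsup k Hk) as [[F _]|[F _]]; tauto).
  rewrite !ccw_between_iff_orient.
  apply (ccw_orient_boundary_invariant _ (edge_slack_affine n C Rad phi));
    try apply (pts_on_region_boundary n Hn C Rad phi HR S eq_refl Hsup'); auto.
  - exact (SED_center_slack_pos n Hn C Rad phi HR S eq_refl Hsup' O r Hr Hcov Hmin HnO).
  - exact (center_slack_pos n Hn C Rad phi HR).
Qed.
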